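(* Let $R:\ \mu=\rho^{(0)}\to\dots\to\rho^{(l)}=\nu$ be a sequence of diagrams and let $T\in\mathcal{T}(\lambda,R)$. Suppose that $$\prod_{\substack{\alpha\in\lambda\\ T(\alpha)\text{ unbarred}}}\Big(a_{T(\alpha)-\rho(\alpha)_{T(\alpha)}}-a_{T(\alpha)-c(\alpha)}\Big)\neq 0$$ as a polynomial in the independent variables $a_i$. Then $\rho(\alpha)_{T(\alpha)}>c(\alpha)$ for all boxes $\alpha\in\lambda$ with $T(\alpha)$ unbarred.
   Context: $a=(a_i)_{i\in\mathbb{Z}}$ are independent variables. Partitions are identified with Young diagrams; box $(i,j)$ is in row $i$, column $j$; content $c(\alpha)=j-i$. A reverse $\lambda$-tableau is a filling $T$ of $\lambda$ by positive integers weakly decreasing along rows and strictly decreasing down columns. $\rho\to\sigma$ means $\sigma$ is obtained from $\rho$ by adding one box; for $R:\ \mu=\rho^{(0)}\to\dots\to\rho^{(l)}=\nu$, $r_i$ is the row of the box added to $\rho^{(i-1)}$. Column order: columns left to right, within a column bottom to top; $\prec$ is strict precedence. $\mathcal{T}(\lambda,R)$ consists of reverse $\lambda$-tableaux $T$ with chosen boxes $\alpha_1\prec\dots\prec\alpha_l$ such that $T(\alpha_i)=r_i$; those entries are barred, the rest unbarred. For $\alpha$ with $\alpha_i\prec\alpha\prec\alpha_{i+1}$ ($0\le i\le l$, conditions with $\alpha_0,\alpha_{l+1}$ void), $\rho(\alpha)=\rho^{(i)}$, and $\rho(\alpha)_k$ is the length of row $k$ of $\rho(\alpha)$. *)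

From HB Require Import structures.
From mathcomp Require Import all_boot all_order all_algebra.
Set Implicit Arguments. Unset Strict Implicit. Unset Printing Implicit Defensive.
Import Order.TTheory GRing.Theory Num.Theory.

(* A partition is a weakly decreasing list of positive row lengths;
   rows are numbered from 1: row k of p has length [row_len p k]. *)
Definition is_partition (p : seq nat) : bool := sorted geq p && (0 \notin p).

Definition row_len (p : seq nat) (k : nat) : nat := nth 0 p k.-1.

(* A box is a pair (row i, column j), both 1-indexed. *)
Definition box := (nat * nat)%type.

Definition boxes (p : seq nat) : seq box :=
  [seq (i, j) | i <- iota 1 (size p), j <- iota 1 (row_len p i)].

Definition content (b : box) : int := (b.2%:Z - b.1%:Z)%R.

Definition reverse_tableau (lam : seq nat) (T : nat -> nat -> nat) : Prop :=
  (forall b, b \in boxes lam -> 0 < T b.1 b.2) /\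
  (forall i j, (i, j) \in boxes lam -> (i, j.+1) \in boxes lam ->
      T i j.+1 <= T i j) /\
  (forall i j, (i, j) \in boxes lam -> (i.+1, j) \in boxes lam ->
      T i.+1 j < T i j).

Definition col_prec (a b : box) : bool :=
  (a.2 < b.2) || ((a.2 == b.2) && (b.1 < a.1)).

(* R = (rho^(0), ..., rho^(l)) is a sequence of diagrams each obtained from
   the previous by adding one box; r = (r_1, ..., r_l) are the rows of the
   added boxes (r_i is stored at index i-1). *)
Definition box_seq (R : seq (seq nat)) (r : seq nat) : Prop :=
  0 < size R /\ size r = (size R).-1 /\
  (forall k, k < size R -> is_partition (nth [::] R k)) /\
  (forall i, i < size r ->
     0 < nth 0 r i /\
     nth [::] R i.+1 = incr_nth (nth [::] R i) (nth 0 r i).-1).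

(* T together with chosen boxes alpha_1 < ... < alpha_l (stored in [al])
   is an element of T(lambda, R). *)
Definition in_TlamR (lam : seq nat) (R : seq (seq nat)) (r : seq nat)
    (T : nat -> nat -> nat) (al : seq box) : Prop :=
  reverse_tableau lam T /\
  size al = size r /\
  all (fun b => b \in boxes lam) al /\
  sorted col_prec al /\
  (forall i, i < size al ->
     T (nth (0, 0) al i).1 (nth (0, 0) al i).2 = nth 0 r i).

(* rho(alpha) = rho^(i) where alpha_i < alpha < alpha_{i+1}, i.e. i is the
   number of chosen boxes preceding alpha in column order. *)
Definition rho_at (R : seq (seq nat)) (al : seq box) (b : box) : seq nat :=
  nth [::] R (count (fun a => col_prec a b) al).

(* Each factor of the product is nonzero, so rho(alpha)_{T(alpha)} <> c(alpha) for every
   unbarred box alpha.  The weak inequality c(alpha) <= rho(alpha)_{T(alpha)} follows by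
   induction along the row of alpha: moving one box right, rho only grows and T weakly
   decreases, and rows of a partition get shorter downwards.  Passing a barred box
   alpha_k = (i, j) adds a box to row T(i, j) of rho, passing an unbarred one uses the
   strict inequality already known there; either way row T(i, j) of rho(i, j+1) exceeds
   c(i, j). *)

From HB Require Import structures.
From mathcomp Require Import all_boot all_order all_algebra.
From mathcomp Require Import zify.

Set Implicit Arguments.
Unset Strict Implicit.
Unset Printing Implicit Defensive.

Import Order.TTheory GRing.Theory Num.Theory.

Lemma col_prec_irr : irreflexive col_prec.
Proof. by case=> i j; rewrite /col_prec /= ltnn eqxx ltnn. Qed.

Lemma col_prec_trans : transitive col_prec.
Proof.
move=> [i2 j2] [i1 j1] [i3 j3]; rewrite /col_prec /=.
case/orP=> [h1|/andP[/eqP e1 h1]]; case/orP=> [h2|/andP[/eqP e2 h2]]; apply/orP.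
- by left; lia.
- by left; lia.
- by left; lia.
- by right; apply/andP; split; [apply/eqP; lia | lia].
Qed.

Section StrictOrderCount.

Variables (T : eqType) (e : rel T).
Hypotheses (e_irr : irreflexive e) (e_trans : transitive e).

Lemma strict_asym x y : e x y -> e y x = false.
Proof. by move=> exy; apply/negP=> /e_trans/(_ exy); rewrite e_irr. Qed.

Lemma count_sorted_index (s : seq T) x : sorted e s -> x \in s ->
  count (e ^~ x) s = index x s.
Proof.
set k := index x s => hs hx.
have hk : k < size s by rewrite index_mem.
have def_s : s = take k s ++ x :: drop k.+1 s.
  by rewrite -(nth_index x hx) -drop_nth // cat_take_drop.
move: hs; rewrite sorted_pairwise // def_s pairwise_cat pairwise_cons allrel_consr.
case/and3P=> /andP[hpre _] _ /andP[hpost _].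
rewrite count_cat /= e_irr add0n.
have /eqP -> : count (e ^~ x) (drop k.+1 s) == 0.
  by rewrite -leqn0 leqNgt -has_count; apply/hasPn=> y /(allP hpost) /strict_asym ->.
by move: hpre; rewrite all_count => /eqP ->; rewrite addn0 size_takel // ltnW.
Qed.

Lemma count_mem_ltn (s : seq T) x y : x \in s -> e x y ->
  count (e ^~ x) s < count (e ^~ y) s.
Proof.
move=> hx exy.
have disj : count (predI (e ^~ x) (pred1 x)) s = 0.
  apply/eqP; rewrite -leqn0 leqNgt -has_count; apply/hasPn=> z _ /=.
  by apply/negP=> /andP[ezx /eqP ezx']; move: ezx; rewrite ezx' e_irr.
have hx1 : 0 < count (pred1 x) s by rewrite -has_count has_pred1.
apply: (leq_trans _ (sub_count (a1 := predU (e ^~ x) (pred1 x)) _ _)).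
- by rewrite -[count (predU _ _) _]addn0 -disj count_predUI -addn1 leq_add2l.
- by move=> z /orP[/e_trans|/eqP ->]; [apply|].
Qed.

End StrictOrderCount.

Lemma partition_row_len_antimono p t t' : is_partition p -> t <= t' ->
  row_len p t' <= row_len p t.
Proof.
move=> /andP[hs _] htt'; rewrite /row_len.
have [ht'|ht'] := ltnP t'.-1 (size p); last by rewrite nth_default.
apply: (sorted_leq_nth (leT := geq)) => //; rewrite ?inE; try lia.
- by move=> x y z /= hyx hzy; apply: leq_trans hzy hyx.
- exact: leqnn.
Qed.

Lemma mem_boxes lam i j :
  (i, j) \in boxes lam -> [/\ 0 < i, 0 < j & j <= row_len lam i].
Proof.
case/allpairsPdep=> x [y [hx hy [-> ->]]].
move: hx hy; rewrite !mem_iota => /andP[hx _] /andP[hy1 hy2]; split; lia.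
Qed.

Lemma mem_boxes_pred lam i j : 0 < j ->
  (i, j.+1) \in boxes lam -> (i, j) \in boxes lam.
Proof.
move=> hj /allpairsPdep[x [y [hx hy [ex ey]]]]; subst x y.
apply/allpairsPdep; exists i, j; split=> //.
by move: hy; rewrite !mem_iota => /andP[hy1 hy2]; apply/andP; split; lia.
Qed.

Section BoxSeq.

Variables (R : seq (seq nat)) (r : seq nat).
Hypothesis hR : box_seq R r.

Lemma box_seq_row_len_mono t m n : m <= n -> n < size R ->
  row_len (nth [::] R m) t <= row_len (nth [::] R n) t.
Proof.
have [_ [hsize [_ hinc]]] := hR.
elim: n => [|n IHn]; first by rewrite leqn0 => /eqP ->.
rewrite leq_eqVlt => /orP[/eqP -> //|hmn] hn.
apply: leq_trans (IHn hmn (ltnW hn)) _.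
have hnr : n < size r by rewrite hsize; lia.
have [_ ->] := hinc n hnr.
by rewrite /row_len nth_incr_nth leq_addl.
Qed.

Lemma box_seq_row_len_added k : k < size r ->
  row_len (nth [::] R k.+1) (nth 0 r k) = (row_len (nth [::] R k) (nth 0 r k)).+1.
Proof.
have [_ [_ [_ hinc]]] := hR.
by move=> /hinc[_ ->]; rewrite /row_len nth_incr_nth eqxx.
Qed.

End BoxSeq.

Section RhoAt.

Variables (lam : seq nat) (R : seq (seq nat)) (r : seq nat).
Variables (T : nat -> nat -> nat) (al : seq box).
Hypotheses (hR : box_seq R r) (hTR : in_TlamR lam R r T al).

Lemma rho_at_index_lt b : count (col_prec ^~ b) al < size R.
Proof.
have [hR0 [hsize _]] := hR; have [_ [hsz _]] := hTR.
by apply: leq_ltn_trans (count_size _ _) _; rewrite hsz hsize prednK.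
Qed.

Lemma rho_at_partition b : is_partition (rho_at R al b).
Proof. by have [_ [_ [hp _]]] := hR; apply/hp/rho_at_index_lt. Qed.

Lemma rho_at_row_len_mono b b' t : col_prec b b' ->
  row_len (rho_at R al b) t <= row_len (rho_at R al b') t.
Proof.
move=> hbb'; apply: (box_seq_row_len_mono hR t _ (rho_at_index_lt b')).
by apply: sub_count => c /col_prec_trans; apply.
Qed.

Lemma rho_at_row_len_barred b b' : b \in al -> col_prec b b' ->
  (row_len (rho_at R al b) (T b.1 b.2)).+1 <= row_len (rho_at R al b') (T b.1 b.2).
Proof.
have [_ [hsz [_ [hsorted hTal]]]] := hTR.
move=> hb hbb'; set k := index b al.
have hk : k < size al by rewrite index_mem.
have hTb : T b.1 b.2 = nth 0 r k by rewrite -hTal // nth_index.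
have hidx : count (col_prec ^~ b) al = k.
  by rewrite (count_sorted_index col_prec_irr col_prec_trans).
rewrite /rho_at hidx hTb -box_seq_row_len_added -?hsz //.
apply: (box_seq_row_len_mono hR _ _ (rho_at_index_lt b')).
by rewrite -hidx (count_mem_ltn col_prec_irr col_prec_trans).
Qed.

Hypothesis rho_at_neq_content : forall i j : nat,
  (i, j) \in boxes lam -> (i, j) \notin al ->
  ((row_len (rho_at R al (i, j)) (T i j))%:Z != content (i, j))%R.

Lemma content_le_rho_at_row_len (i j : nat) : (i, j) \in boxes lam ->
  (content (i, j) <= (row_len (rho_at R al (i, j)) (T i j))%:Z)%R.
Proof.
elim: j => [|j IHj] hb; first by have [] := mem_boxes hb.
have [hi _ _] := mem_boxes hb.
have [-> | j_gt0] := posnP j; first by rewrite /content /=; lia.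
have hb' := mem_boxes_pred j_gt0 hb.
have hbb' : col_prec (i, j) (i, j.+1) by rewrite /col_prec /= ltnSn.
have hTrow : T i j.+1 <= T i j by apply: hTR.1.2.1.
have step : (content (i, j) < (row_len (rho_at R al (i, j.+1)) (T i j))%:Z)%R.
  have := IHj hb'; have [hbal | hbal] := boolP ((i, j) \in al).
    by have /= := rho_at_row_len_barred hbal hbb'; lia.
  have := rho_at_neq_content hb' hbal.
  by have := rho_at_row_len_mono (T i j) hbb'; lia.
have := partition_row_len_antimono (rho_at_partition (i, j.+1)) hTrow.
by move: step; rewrite /content /=; lia.
Qed.

End RhoAt.

Theorem lemma2p3 (lam : seq nat) (R : seq (seq nat)) (r : seq nat)
    (T : nat -> nat -> nat) (al : seq box) :
  is_partition lam ->
  box_seq R r ->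
  in_TlamR lam R r T al ->
  (exists a : int -> int,
     (\prod_(b <- boxes lam | b \notin al)
        (a ((T b.1 b.2)%:Z - (row_len (rho_at R al b) (T b.1 b.2))%:Z)
         - a ((T b.1 b.2)%:Z - content b)) != 0)%R) ->
  forall b, b \in boxes lam -> b \notin al ->
    (content b < (row_len (rho_at R al b) (T b.1 b.2))%:Z)%R.
Proof.
move=> _ hR hTR [a prod_neq0].
have neq_content (i j : nat) : (i, j) \in boxes lam -> (i, j) \notin al ->
    ((row_len (rho_at R al (i, j)) (T i j))%:Z != content (i, j))%R.
  move=> hb hbal; move: prod_neq0; rewrite prodf_seq_neq0 => /allP/(_ _ hb).
  by rewrite hbal subr_eq0; apply: contra => /eqP ->.
move=> [i j] hb hbal; rewrite lt_neqAle eq_sym neq_content //.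
exact: content_le_rho_at_row_len hR hTR neq_content _ _ hb.
Qed.
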